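(* Let $X$ be a finite $T_0$ topological space, $\mathcal V$ a multivector field on $X$, and $\gamma$ an essential solution in $X$. Then there exist an essential solution $\rho$ in $\alpha(\gamma)$ with $\operatorname{im}\rho=\alpha(\gamma)$ and an essential solution $\rho'$ in $\omega(\gamma)$ with $\operatorname{im}\rho'=\omega(\gamma)$.
   Context: Notation: $\operatorname{cl}$ is closure; $A\subset X$ is locally closed if $\operatorname{cl}A\setminus A$ is closed. A multivector field $\mathcal V$ on $X$ is a partition of $X$ into locally closed sets (multivectors); $[x]_{\mathcal V}$ is the multivector containing $x$. A multivector $V$ is critical if $H(\operatorname{cl}V,\operatorname{cl}V\setminus V)$ (relative singular homology) is nontrivial, regular otherwise. $A$ is $\mathcal V$-compatible if it is a union of multivectors; $\langle A\rangle_{\mathcal V}$ is the smallest locally closed $\mathcal V$-compatible set containing $A$. $\Pi_{\mathcal V}(x)=\operatorname{cl}\{x\}\cup[x]_{\mathcal V}$. A solution is a partial map $\gamma:\mathbb Z\nrightarrow X$ with domain an integer interval and $\gamma(t+1)\in\Pi_{\mathcal V}(\gamma(t))$; a full solution has domain $\mathbb Z$. $\alpha(\gamma)=\langle\bigcap_{t\le0}\gamma((-\infty,t])\rangle_{\mathcal V}$, $\omega(\gamma)=\langle\bigcap_{t\ge0}\gamma([t,\infty))\rangle_{\mathcal V}$. A full solution is essential unless $\alpha(\gamma)$ or $\omega(\gamma)$ is contained in a single regular multivector; an essential solution in $A$ is an essential full solution with image in $A$. *)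

From HB Require Import structures.
From mathcomp Require Import all_boot all_order all_algebra.
From mathcomp Require Import all_classical all_reals.
From mathcomp Require Import topology.
From mathcomp Require Import Rstruct Rstruct_topology.
Set Implicit Arguments. Unset Strict Implicit. Unset Printing Implicit Defensive.
Import Order.TTheory GRing.Theory Num.Theory.
Local Open Scope classical_set_scope.
Local Open Scope ring_scope.

Notation RR := Rdefinitions.R.

Definition std_simplex (n : nat) : set 'rV[RR]_(n.+1) :=
  [set x | (forall i, 0 <= x ord0 i) /\ \sum_i x ord0 i = 1].
Arguments std_simplex n : clear implicits.

Definition face (m : nat) (i : 'I_(m.+2)) (x : 'rV[RR]_(m.+1)) : 'rV[RR]_(m.+2) :=
  \row_j (if unlift i j is Some k then x ord0 k else 0).

Section SingularHomology.
Variable X : topologicalType.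

(* a (candidate) singular n-simplex: only its values on Δ^n matter *)
Definition simplex (n : nat) := 'rV[RR]_(n.+1) -> X.

Definition sing_simplex (n : nat) (A : set X) (s : simplex n) : Prop :=
  {within (std_simplex n), continuous s} /\ s @` (std_simplex n) `<=` A.

Definition sim_eq (n : nat) (s t : simplex n) : Prop :=
  forall x, std_simplex n x -> s x = t x.

(* singular n-chains as formal finite sums  sum_k a_k s_k *)
Definition chain (n : nat) := seq (int * simplex n).

Definition chain_in (n : nat) (A : set X) (c : chain n) : Prop :=
  forall p, List.In p c -> sing_simplex A p.2.

Definition coef (n : nat) (c : chain n) (t : simplex n) : int :=
  \sum_(p <- c) (if `[< sim_eq p.2 t >] then p.1 else 0).

Definition boundary (m : nat) (c : chain m.+1) : chain m :=
  flatten [seq [seq (((-1) ^+ i * p.1)%R, p.2 \o face i) | i : 'I_(m.+2) <- enum 'I_(m.+2)]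
          | p <- c].

Definition rel_cycle (A B : set X) (n : nat) : chain n -> Prop :=
  match n with
  | 0 => fun c => chain_in A c
  | m.+1 => fun c => chain_in A c /\
      forall t : simplex m, ~ sing_simplex B t -> coef (boundary c) t = 0
  end.

Definition rel_boundary (A B : set X) (n : nat) (c : chain n) : Prop :=
  exists d : chain n.+1, chain_in A d /\
    forall t : simplex n, ~ sing_simplex B t -> coef c t = coef (boundary d) t.

(* H(A, B) is nontrivial: H_n(A, B; Z) <> 0 for some n *)
Definition homology_nontrivial (A B : set X) : Prop :=
  exists n (c : chain n), rel_cycle A B c /\ ~ rel_boundary A B c.

Definition locally_closed (A : set X) : Prop := closed (closure A `\` A).

Definition multivector_field (V : set (set X)) : Prop :=
  [/\ forall W, V W -> W !=set0 /\ locally_closed W,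
      forall x, exists2 W, V W & W x
    & forall W W', V W -> V W' -> W `&` W' !=set0 -> W = W'].

Definition mv_of (V : set (set X)) (x : X) : set X :=
  \bigcup_(W in [set W | V W /\ W x]) W.

Definition critical (W : set X) : Prop :=
  homology_nontrivial (closure W) (closure W `\` W).
Definition regular (W : set X) : Prop := ~ critical W.

Definition compatible (V : set (set X)) (A : set X) : Prop :=
  forall x, A x -> mv_of V x `<=` A.

Definition lcc_hull (V : set (set X)) (A : set X) : set X :=
  \bigcap_(B in [set B | locally_closed B /\ compatible V B /\ A `<=` B]) B.

Definition Pi (V : set (set X)) (x : X) : set X :=
  closure [set x] `|` mv_of V x.

Definition full_solution (V : set (set X)) (g : int -> X) : Prop :=
  forall t, Pi V (g t) (g (t + 1)).

Definition alpha_lim (V : set (set X)) (g : int -> X) : set X :=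
  lcc_hull V (\bigcap_(t in [set t : int | t <= 0]) [set g s | s in [set s | s <= t]]).

Definition omega_lim (V : set (set X)) (g : int -> X) : set X :=
  lcc_hull V (\bigcap_(t in [set t : int | 0 <= t]) [set g s | s in [set s | t <= s]]).

Definition essential (V : set (set X)) (g : int -> X) : Prop :=
  [/\ full_solution V g,
      ~ (exists2 W, V W /\ regular W & alpha_lim V g `<=` W)
    & ~ (exists2 W, V W /\ regular W & omega_lim V g `<=` W)].

Definition essential_in (V : set (set X)) (A : set X) (g : int -> X) : Prop :=
  essential V g /\ (forall t, A (g t)).

End SingularHomology.

From mathcomp Require Import all_boot all_order all_algebra.
From mathcomp Require Import all_classical all_reals.
From mathcomp Require Import topology.
From mathcomp Require Import finmap zify.
Local Open Scope classical_set_scope.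

Set Implicit Arguments. Unset Strict Implicit. Unset Printing Implicit Defensive.
Import Order.TTheory GRing.Theory.

(* Since X is finite, gamma eventually stays in its omega-limit set R, the set
   of points visited at arbitrarily late times, and any two points of R are
   joined by a segment of gamma inside R.  In a finite space, local closedness
   is convexity for the specialization preorder; hence the points of the hull
   <R> that can be reached from a fixed point of R, and from which it can be
   reached again, by Pi-steps inside <R> form a locally closed compatible set
   containing R, i.e. all of <R>.  Concatenating such loops gives a closed
   walk through every point of <R>; repeating it periodically yields a full
   solution whose image and alpha- and omega-limit sets are all <R>, so it
   inherits essentiality from gamma.  The alpha case is the same argument in
   backward time. *)

Section LimitSets.
Local Open Scope ring_scope.
Variable T : Type.

Definition omega_set (h : int -> T) : set T :=
  \bigcap_(t in [set t : int | 0 <= t]) [set h s | s in [set s | t <= s]].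

Lemma alpha_setE (h : int -> T) :
  \bigcap_(t in [set t : int | t <= 0]) [set h s | s in [set s | s <= t]] =
  omega_set (h \o -%R).
Proof.
apply/seteqP; split => x hx t /= t0.
- have [s /= st <-] := hx (- t) ltac:(rewrite /=; lia).
  by exists (- s) => /=; rewrite ?opprK //; lia.
- have [s /= ts <-] := hx (- t) ltac:(rewrite /=; lia).
  by exists (- s) => //=; lia.
Qed.

Lemma omega_set_periodic (h : int -> T) (n : nat) :
  (0 < n)%N -> (forall t, h (t + n%:Z) = h t) -> omega_set h = range h.
Proof.
move=> n0 hn; apply/seteqP; split => x.
  by move=> /(_ 0 (lexx 0)) [s _ <-]; exists s.
have hkn (s : int) (k : nat) : h (s + k%:Z * n%:Z) = h s.
  by elim: k => [|k IH]; rewrite ?mul0r ?addr0 // -[RHS]IH -[RHS]hn; congr h; nia.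
move=> [s _ <-] t /= t0; exists (s + (`|s| + `|t|)%N%:Z * n%:Z); last exact: hkn.
rewrite /=; nia.
Qed.

Lemma omega_set_periodic_opp (h : int -> T) (n : nat) :
  (0 < n)%N -> (forall t, h (t + n%:Z) = h t) -> omega_set (h \o -%R) = range h.
Proof.
move=> n0 hn; rewrite (@omega_set_periodic _ n) //.
  by apply/seteqP; split => _ [t _ <-]; exists (- t); rewrite //= opprK.
by move=> t /=; rewrite -[in RHS](addrNK n%:Z (- t)) hn opprD.
Qed.

End LimitSets.

Section PeriodicSeq.
Local Open Scope ring_scope.
Variables (T : eqType) (x : T) (p : seq T).

Definition periodic_seq (t : int) : T := nth x p `|(t %% (size p)%:Z)%Z|%N.

Hypothesis p_neq0 : p != [::].

Let size_gt0 : (0 < size p)%N. Proof. by rewrite lt0n size_eq0. Qed.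

Let periodic_seq_index t : (0 <= (t %% (size p)%:Z)%Z < (size p)%:Z)%R.
Proof.
have n0 : (size p)%:Z != 0 by rewrite eqz_nat size_eq0.
by rewrite modz_ge0 //= -[X in _ < X]gez0_abs ?ltz_mod.
Qed.

Lemma periodic_seqD t : periodic_seq (t + (size p)%:Z) = periodic_seq t.
Proof. by rewrite /periodic_seq modzDr. Qed.

Lemma range_periodic_seq : range periodic_seq = [set` p].
Proof.
apply/seteqP; split => [_ [t _ <-]|y yp].
  by rewrite /= mem_nth //; have := periodic_seq_index t; lia.
exists (index y p)%:Z => //; rewrite /periodic_seq modz_small ?nth_index //.
by move: yp; rewrite /= -index_mem; lia.
Qed.

Lemma periodic_seq_path (e : rel T) :
  path e x p -> last x p = x -> forall t, e (periodic_seq t) (periodic_seq (t + 1)).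
Proof.
move=> /(pathP x) step px t; rewrite /periodic_seq -modzDml.
have := periodic_seq_index t; set i := (t %% _)%Z => /andP [i0 ilt].
have [i1n|i1n] := ltP (i + 1) (size p)%:Z.
  rewrite modz_small; last by lia.
  have -> : `|(i + 1)%R|%N = `|i|.+1 by lia.
  by apply: (step `|i|.+1); lia.
have -> : i + 1 = (size p)%:Z by lia.
by rewrite modzz (_ : `|i|%N = (size p).-1) ?nth_last ?px; [exact: step 0 size_gt0|lia].
Qed.

End PeriodicSeq.

Section FiniteMultivectorDynamics.
Local Open Scope ring_scope.
Variables (X : topologicalType) (V : set (set X)).
Hypothesis Xfin : finite_set [set: X].

Lemma mv_of_sym x y : mv_of V x y -> mv_of V y x.
Proof. by move=> [W [VW Wx] Wy]; exists W. Qed.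

Lemma Pi_refl x : Pi V x x.
Proof. by left; apply: subset_closure. Qed.

Definition Pi_in (S : set X) : rel X := fun x y => `[< Pi V x y /\ S y >].

Lemma Pi_inP S x y : reflect (Pi V x y /\ S y) (Pi_in S x y).
Proof. exact: asboolP. Qed.

Lemma path_Pi_in_sub S x p : path (Pi_in S) x p -> forall y, y \in p -> S y.
Proof.
elim: p x => // z p IH x /= /andP [/Pi_inP [_ Sz] zp] y.
by rewrite in_cons => /predU1P [->|]; last exact: IH zp y.
Qed.

Definition reach (S : set X) (x y : X) : Prop :=
  exists2 p, path (Pi_in S) x p & last x p = y.

Definition strongly_connected (S : set X) : Prop :=
  forall a b, S a -> S b -> reach S a b.

Lemma reach_refl S x : reach S x x.
Proof. by exists [::]. Qed.

Lemma reach_trans S y x z : reach S x y -> reach S y z -> reach S x z.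
Proof.
by move=> [p xp <-] [q yq <-]; exists (p ++ q); rewrite ?cat_path ?xp ?last_cat.
Qed.

Lemma reach_Pi S x y : Pi V x y -> S y -> reach S x y.
Proof. by move=> xy Sy; exists [:: y]; rewrite //= andbT; apply/Pi_inP. Qed.

Lemma reach_sub S S' x y : S `<=` S' -> reach S x y -> reach S' x y.
Proof.
move=> SS' [p xp <-]; exists p => //; apply: sub_path xp => a b /Pi_inP [ab Sb].
by apply/Pi_inP; split; last exact: SS'.
Qed.

Lemma solution_reach (g : int -> X) S s s' : full_solution V g -> s <= s' ->
  (forall u, s < u <= s' -> S (g u)) -> reach S (g s) (g s').
Proof.
move=> gsol ss' gS.
suff reach_k (k : nat) : s + k%:Z <= s' -> reach S (g s) (g (s + k%:Z)).
  by rewrite (_ : s' = s + `|s' - s|%N%:Z); [apply: reach_k|]; lia.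
elim: k => [|k IH] sk; first by rewrite addr0; apply: reach_refl.
apply: (reach_trans (IH _)); first lia.
have -> : s + k.+1%:Z = s + k%:Z + 1 by lia.
by apply: reach_Pi; [apply: gsol | apply: gS; lia].
Qed.

Definition closure_convex (B : set X) : Prop :=
  forall x y z, B x -> B z -> closure [set z] y -> closure [set y] x -> B y.

Lemma locally_closed_convex B : locally_closed B -> closure_convex B.
Proof.
move=> Blc x y z Bx Bz zy yx; apply: contrapT => nBy.
have By' : (closure B `\` B) y by split => //; apply: closureS zy => _ ->.
by have [] : (closure B `\` B) x by apply: Blc; apply: closureS yx => _ ->.
Qed.

Lemma finite_closure_point (A : set X) (z : X) :
  closure A z -> exists2 a, A a & closure [set a] z.
Proof.
move=> Az; apply: contrapT => noa.
have Afin : finite_set A := sub_finite_set (@subsetT _ A) Xfin.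
have [a [Aa]] : A `&` \bigcap_(a in [set` fset_set A]) ~` closure [set a] !=set0.
  apply: Az; apply: filter_bigI => a; rewrite in_fset_set // in_setE => Aa.
  apply: open_nbhs_nbhs; split; first exact/closed_openC/closed_closure.
  by move=> za; apply: noa; exists a.
by move/(_ a); apply; [rewrite /= in_fset_set // in_setE | apply: subset_closure].
Qed.

Lemma closure_convex_locally_closed B : closure_convex B -> locally_closed B.
Proof.
move=> Bconv z Bz; have [y [By nBy] yz] := finite_closure_point Bz.
have [x Bx xy] := finite_closure_point By.
split; last by move=> Bz'; apply: nBy (Bconv _ _ _ Bz' Bx xy yz).
rewrite (proj1 (closure_id _) (@closed_closure _ B)).
by apply: closureS Bz => ? [].
Qed.

Lemma lcc_hull_sub A : A `<=` lcc_hull V A.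
Proof. by move=> x Ax B [_ [_]]; apply. Qed.

Lemma lcc_hull_min A B :
  locally_closed B -> compatible V B -> A `<=` B -> lcc_hull V A `<=` B.
Proof. by move=> Blc Bc AB x; apply. Qed.

Lemma lcc_hull_compatible A : compatible V (lcc_hull V A).
Proof.
by move=> x Ax y xy B BA; have [_ [Bc _]] := BA; apply: Bc (Ax B BA) y xy.
Qed.

Lemma lcc_hull_convex A : closure_convex (lcc_hull V A).
Proof.
move=> x y z Ax Az zy yx B BA; have [Blc _] := BA.
exact: locally_closed_convex Blc _ _ _ (Ax B BA) (Az B BA) zy yx.
Qed.

Lemma lcc_hull_idem A : lcc_hull V (lcc_hull V A) = lcc_hull V A.
Proof.
apply/seteqP; split; last exact: lcc_hull_sub.
apply: lcc_hull_min => //; last exact: lcc_hull_compatible.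
by apply: closure_convex_locally_closed; apply: lcc_hull_convex.
Qed.

Lemma lcc_hull_strongly_connected S :
  S !=set0 -> strongly_connected S -> strongly_connected (lcc_hull V S).
Proof.
move=> [a0 Sa0] Sconn; set L := lcc_hull V S.
pose C := [set x | L x /\ reach L a0 x /\ reach L x a0].
suff LC : L `<=` C.
  by move=> a b /LC [_ [_ aa0]] /LC [_ [a0b _]]; apply: reach_trans aa0 a0b.
apply: lcc_hull_min.
- apply: closure_convex_locally_closed => x y z [Lx [_ xa0]] [Lz [a0z _]] zy yx.
  have Ly : L y := lcc_hull_convex Lx Lz zy yx.
  split; [done | split].
  + by apply: (reach_trans a0z); apply: reach_Pi Ly; left.
  + by apply: reach_trans xa0; apply: reach_Pi Lx; left.
- move=> x [Lx [a0x xa0]] y xy; have Ly : L y := lcc_hull_compatible Lx xy.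
  split; [done | split].
  + by apply: (reach_trans a0x); apply: reach_Pi Ly; right.
  + by apply: reach_trans xa0; apply: reach_Pi Lx; right; apply: mv_of_sym.
- move=> a Sa; have SL : S `<=` L := @lcc_hull_sub S.
  by split; [apply: SL | split; apply: reach_sub SL (Sconn _ _ _ _)].
Qed.

Lemma covering_closed_path S a0 : S a0 -> strongly_connected S ->
  exists p, [/\ path (Pi_in S) a0 p, last a0 p = a0, p != [::]
              & forall x, S x -> x \in p].
Proof.
move=> Sa0 Sconn.
have loops (s : seq X) : (forall x, x \in s -> S x) -> exists p,
    [/\ path (Pi_in S) a0 p, last a0 p = a0 & forall x, x \in s -> x \in a0 :: p].
  elim: s => [|x s IH] sS; first by exists [::].
  have [p [a0p pa0 sp]] := IH (fun y ys => sS y ltac:(by rewrite in_cons ys orbT)).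
  have Sx := sS x (mem_head x s).
  have [q a0q qx] := Sconn a0 x Sa0 Sx; have [r xr ra0] := Sconn x a0 Sx Sa0.
  exists (p ++ q ++ r); split.
  - by rewrite !cat_path a0p pa0 a0q qx xr.
  - by rewrite !last_cat pa0 qx.
  - move=> y; rewrite catA !in_cons !mem_cat => /predU1P [->|/sp].
      have := mem_last a0 (p ++ q); rewrite last_cat pa0 qx in_cons mem_cat.
      by move=> /orP [->|->]; rewrite ?orbT.
    by rewrite in_cons => /orP [->|->]; rewrite ?orbT.
have Sfin : finite_set S := sub_finite_set (@subsetT _ S) Xfin.
have [p [a0p pa0 Sp]] :=
  loops (fset_set S) (fun x => ltac:(by rewrite in_fset_set // in_setE)).
exists (rcons p a0); split.
- by rewrite rcons_path a0p pa0; apply/Pi_inP; split; first exact: Pi_refl.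
- by rewrite last_rcons.
- by rewrite -size_eq0 size_rcons.
- by move=> x Sx; rewrite mem_rcons Sp // in_fset_set // in_setE.
Qed.

Lemma omega_set_eventually (h : int -> X) :
  exists N : nat, forall t, (N%:Z <= t)%R -> omega_set h (h t).
Proof.
have cofin : finite_set (~` omega_set h) := sub_finite_set (@subsetT _ _) Xfin.
have [|N _ hN] := @filter_bigI _ _ (fset_set (~` omega_set h))
    (fun x => [set n : nat | h n%:Z <> x]) _ eventually_filter.
  move=> x; rewrite in_fset_set // in_setE => xnot.
  apply: contrapT => hits; apply: xnot => t /= t0; apply: contrapT => nohit.
  apply: hits; exists `|t|%N => // n /= tn hnx; apply: nohit.
  by exists n%:Z => //=; lia.
exists N => t Nt; apply: contrapT => hnot.
have /(_ (h t)) := hN `|t|%N ltac:(rewrite /=; lia).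
by rewrite /= in_fset_set // in_setE => /(_ hnot); apply; congr h; lia.
Qed.

Lemma omega_set_neq0 (h : int -> X) : omega_set h !=set0.
Proof. by have [N hN] := omega_set_eventually h; exists (h N%:Z); apply: hN. Qed.

Lemma omega_set_strongly_connected (g : int -> X) :
  full_solution V g -> strongly_connected (omega_set g).
Proof.
move=> gsol a b ra rb; have [N hN] := omega_set_eventually g.
have [s /= Ns <-] := ra N%:Z ltac:(rewrite /=; lia).
have [s' /= ss' <-] := rb s ltac:(rewrite /=; lia).
by apply: solution_reach => // u su; apply: hN; lia.
Qed.

Lemma alpha_set_strongly_connected (g : int -> X) :
  full_solution V g -> strongly_connected (omega_set (g \o -%R)).
Proof.
move=> gsol a b ra rb; have [N hN] := omega_set_eventually (g \o -%R).
have [s' /= Ns' <-] := rb N%:Z ltac:(rewrite /=; lia).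
have [s /= s's <-] := ra s' ltac:(rewrite /=; lia).
apply: solution_reach => //; first lia.
by move=> u su; rewrite -[u]opprK; apply: hN; lia.
Qed.

Lemma alpha_limE (g : int -> X) : alpha_lim V g = lcc_hull V (omega_set (g \o -%R)).
Proof. by rewrite /alpha_lim alpha_setE. Qed.

Lemma omega_limE (g : int -> X) : omega_lim V g = lcc_hull V (omega_set g).
Proof. by []. Qed.

Lemma hull_periodic_solution S : S !=set0 -> strongly_connected S ->
  exists rho, [/\ full_solution V rho, range rho = lcc_hull V S,
                  alpha_lim V rho = lcc_hull V S & omega_lim V rho = lcc_hull V S].
Proof.
move=> S0 Sconn; set L := lcc_hull V S.
have [a0 La0] : L !=set0 by case: S0 => a Sa; exists a; apply: lcc_hull_sub.
have [p [a0p pa0 p0 Lp]] :=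
  covering_closed_path La0 (lcc_hull_strongly_connected S0 Sconn).
have rhoL : range (periodic_seq a0 p) = L.
  rewrite range_periodic_seq //; apply/seteqP; split => x xp.
    exact: path_Pi_in_sub a0p x xp.
  exact: Lp.
have n0 : (0 < size p)%N by rewrite lt0n size_eq0.
exists (periodic_seq a0 p); split => //.
- by move=> t; have /Pi_inP [] := periodic_seq_path p0 a0p pa0 t.
- by rewrite alpha_limE (omega_set_periodic_opp n0 (periodic_seqD _ _)) rhoL
     lcc_hull_idem.
- by rewrite omega_limE (omega_set_periodic n0 (periodic_seqD _ _)) rhoL
     lcc_hull_idem.
Qed.

Lemma essential_on_hull S : S !=set0 -> strongly_connected S ->
  ~ (exists2 W, V W /\ regular W & lcc_hull V S `<=` W) ->
  exists rho, essential_in V (lcc_hull V S) rho /\ range rho = lcc_hull V S.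
Proof.
move=> S0 Sconn Sess.
have [rho [rhosol rhoL rhoa rhoo]] := hull_periodic_solution S0 Sconn.
exists rho; split => //; split; last by move=> t; rewrite -rhoL; exists t.
by split; rewrite ?rhoa ?rhoo.
Qed.

End FiniteMultivectorDynamics.

Theorem proposition3p10 (X : topologicalType)
  (Xfin : finite_set [set: X]) (XT0 : @kolmogorov_space X)
  (V : set (set X)) (HV : multivector_field V)
  (gamma : int -> X) (Hg : essential_in V [set: X] gamma) :
  (exists rho : int -> X,
      essential_in V (alpha_lim V gamma) rho /\ range rho = alpha_lim V gamma) /\
  (exists rho' : int -> X,
      essential_in V (omega_lim V gamma) rho' /\ range rho' = omega_lim V gamma).
Proof.
case: Hg => [[gsol alpha_ess omega_ess] _]; split.
- rewrite alpha_limE in alpha_ess *; apply: essential_on_hull alpha_ess => //.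
    exact: omega_set_neq0.
  exact: alpha_set_strongly_connected.
- rewrite omega_limE in omega_ess *; apply: essential_on_hull omega_ess => //.
    exact: omega_set_neq0.
  exact: omega_set_strongly_connected.
Qed.
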